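(* Let $G$ be a topological group and $A$ a topological $G$-module, and suppose that for every $p\ge 0$ the augmented column complex $0\to A_c^p(G,A)\xrightarrow{\epsilon}A_{lc}^{p,0}(G,A)\xrightarrow{d_v}A_{lc}^{p,1}(G,A)\xrightarrow{d_v}\cdots$ is exact. Then the inclusion $C_c^*(G,A)\hookrightarrow C_{lc}^*(G,A)$ induces an isomorphism in cohomology.
   Context: A topological $G$-module is an abelian topological group $A$ with an action of $G$ by group automorphisms such that $G\times A\to A$ is continuous. For an identity neighbourhood $U$ of $G$ put $\Gamma_U^0:=G$ and, for $q\ge1$, $\Gamma_U^q:=\{(g_0,\dots,g_q)\in G^{q+1}\mid g_i^{-1}g_j\in U\ \forall i,j\}$. $G$ acts on maps $f\colon G^{n+1}\to A$ by $(g.f)(g_0,\dots,g_n)=g.f(g^{-1}g_0,\dots,g^{-1}g_n)$, with differential $df(g_0,\dots,g_{n+1})=\sum_i(-1)^if(g_0,\dots,\widehat{g_i},\dots,g_{n+1})$. $C_c^n(G,A)$ is the complex of continuous $G$-equivariant maps $G^{n+1}\to A$; $C_{lc}^n(G,A)$ is the complex of $G$-equivariant maps $G^{n+1}\to A$ whose restriction to $\Gamma_U^n$ is continuous for some identity neighbourhood $U$. $A_c^p(G,A):=C(G^{p+1},A)$ (all continuous maps). $A_{lc}^{p,q}(G,A)$ is the group of maps $f\colon G^{p+1}\times G^{q+1}\to A$ whose restriction to $G^{p+1}\times\Gamma_U^q$ is continuous for some identity neighbourhood $U$, with $d_vf(\vec x,y_0,\dots,y_{q+1})=(-1)^p\sum_{i=0}^{q+1}(-1)^if(\vec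 x,y_0,\dots,\widehat{y_i},\dots,y_{q+1})$, and the augmentation is $\epsilon(f)(\vec x,y_0)=f(\vec x)$. *)

From HB Require Import structures.
From mathcomp Require Import all_boot all_order all_algebra.
From mathcomp Require Import all_classical all_reals all_analysis.
Set Implicit Arguments. Unset Strict Implicit. Unset Printing Implicit Defensive.
Import Order.TTheory GRing.Theory Num.Theory.
Local Open Scope classical_set_scope.
Local Open Scope ring_scope.

Record topGroup := TopGroup {
  tg_car :> topologicalType;
  tg_mul : tg_car -> tg_car -> tg_car;
  tg_inv : tg_car -> tg_car;
  tg_one : tg_car;
  tg_mulA : forall x y z, tg_mul x (tg_mul y z) = tg_mul (tg_mul x y) z;
  tg_mul1g : forall x, tg_mul tg_one x = x;
  tg_mulg1 : forall x, tg_mul x tg_one = x;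
  tg_mulVg : forall x, tg_mul (tg_inv x) x = tg_one;
  tg_mulgV : forall x, tg_mul x (tg_inv x) = tg_one;
  tg_mul_cont : continuous (fun p : tg_car * tg_car => tg_mul p.1 p.2);
  tg_inv_cont : continuous tg_inv
}.

Record topGModule (G : topGroup) := TopGModule {
  tm_car :> topologicalZmodType;
  tm_act : G -> tm_car -> tm_car;
  tm_act_add : forall g a b, tm_act g (a + b) = tm_act g a + tm_act g b;
  tm_act_one : forall a, tm_act (tg_one G) a = a;
  tm_act_mul : forall g h a, tm_act (tg_mul g h) a = tm_act g (tm_act h a);
  tm_act_cont : continuous (fun p : G * tm_car => tm_act p.1 p.2)
}.

(** G^{n+1} is represented by functions 'I_(n+1) -> G with the product
    topology. *)
Notation "G ^^ n" := ({ptws 'I_n -> tg_car G}) (at level 30).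

Definition Gamma (G : topGroup) (U : set G) (q : nat) : set (G ^^ q.+1) :=
  if q is 0 then setT
  else [set x | forall i j, U (tg_mul (tg_inv (x i)) (x j))].
Arguments Gamma G U q : clear implicits.

Definition equivariant (G : topGroup) (A : topGModule G) (n : nat)
  (f : G ^^ n.+1 -> A) : Prop :=
  forall (g : G) (x : G ^^ n.+1),
    tm_act g (f (fun i => tg_mul (tg_inv g) (x i))) = f x.

Definition dhom (G : topGroup) (A : topGModule G) (n : nat)
  (f : G ^^ n.+1 -> A) : G ^^ n.+2 -> A :=
  fun x => \sum_(i < n.+2) (f (fun j => x (lift i j))) *~ ((-1) ^+ i).

Definition Cc (G : topGroup) (A : topGModule G) (n : nat)
  (f : G ^^ n.+1 -> A) : Prop :=
  equivariant f /\ continuous f.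

Definition Clc (G : topGroup) (A : topGModule G) (n : nat)
  (f : G ^^ n.+1 -> A) : Prop :=
  equivariant f /\
  exists U : set G, nbhs (tg_one G) U /\ {within Gamma G U n, continuous f}.

Definition cocycle (G : topGroup) (A : topGModule G)
  (C : forall n, (G ^^ n.+1 -> A) -> Prop) (n : nat) (f : G ^^ n.+1 -> A) :=
  C n f /\ dhom f = 0.

Definition coboundary (G : topGroup) (A : topGModule G)
  (C : forall n, (G ^^ n.+1 -> A) -> Prop) (n : nat) (f : G ^^ n.+1 -> A) :
  Prop :=
  match n return (G ^^ n.+1 -> A) -> Prop with
  | 0 => fun f => f = 0
  | m.+1 => fun f => exists h : G ^^ m.+1 -> A, C m h /\ f = dhom h
  end f.

(** The map H^n(C_c) -> H^n(C_lc) induced by the inclusion is bijective: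
    - injective: a C_c-cocycle that is a C_lc-coboundary is a
      C_c-coboundary;
    - surjective: every C_lc-cocycle differs from a C_c-cocycle by a
      C_lc-coboundary. *)
Definition inclusion_induces_iso_in_cohomology (G : topGroup)
  (A : topGModule G) : Prop :=
  forall n : nat,
    (forall f : G ^^ n.+1 -> A,
       cocycle (@Cc G A) f -> coboundary (@Clc G A) f ->
               coboundary (@Cc G A) f) /\
    (forall f : G ^^ n.+1 -> A, cocycle (@Clc G A) f ->
       exists f' : G ^^ n.+1 -> A, cocycle (@Cc G A) f' /\
                  coboundary (@Clc G A) (f - f')).

Definition Ac (G : topGroup) (A : topGModule G) (p : nat)
  (f : G ^^ p.+1 -> A) : Prop := continuous f.

Definition Alc (G : topGroup) (A : topGModule G) (p q : nat)
  (f : G ^^ p.+1 * G ^^ q.+1 -> A) : Prop :=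
  exists U : set G, nbhs (tg_one G) U /\
    {within setT `*` Gamma G U q, continuous f}.

Definition dv (G : topGroup) (A : topGModule G) (p q : nat)
  (f : G ^^ p.+1 * G ^^ q.+1 -> A) : G ^^ p.+1 * G ^^ q.+2 -> A :=
  fun xy => (\sum_(i < q.+2) (f (xy.1, fun j => xy.2 (lift i j))) *~ ((-1) ^+ i))
            *~ ((-1) ^+ p).

Definition aug (G : topGroup) (A : topGModule G) (p : nat)
  (f : G ^^ p.+1 -> A) : G ^^ p.+1 * G ^^ 1 -> A :=
  fun xy => f xy.1.

Definition column_exact (G : topGroup) (A : topGModule G) (p : nat) : Prop :=
  (forall f : G ^^ p.+1 -> A, Ac f -> aug f = 0 -> f = 0 :> (G ^^ p.+1 -> A)) /\
  (forall f : G ^^ p.+1 * G ^^ 1 -> A, Alc f -> dv f = 0 ->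
     exists h : G ^^ p.+1 -> A, Ac h /\ f = aug h) /\
  (forall (q : nat) (f : G ^^ p.+1 * G ^^ q.+2 -> A), Alc f -> dv f = 0 ->
     exists h : G ^^ p.+1 * G ^^ q.+1 -> A, Alc h /\ f = dv h).

(* Let K^{p,q} = A_lc^{p,q}(G,A)^G, a double complex with the homogeneous
   differential d_h in the first variable and d_v in the second.  Its columns
   remain exact after taking invariants, because G acts freely on the first
   factor.  Hence, by a staircase argument, a total cochain whose coboundary can
   only be nonzero in row 0 is cohomologous to a continuous equivariant cochain
   h placed in row 0.  Column 0 receives C_lc (g |-> g(y)), and the diagonal map
   T |-> (z |-> sum_k T^{k,n-k}((z_0..z_k), (z_k..z_n))) is a chain map back to
   C_lc that is left inverse to both augmentations.
   Surjectivity: a C_lc-cocycle f in column 0 is pushed to row 0 and mapped back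
   diagonally, giving f = d(...) + h.  Injectivity: if f is a continuous cocycle
   and f = dg with g in C_lc, then g in column 0 minus the cochain
   (x, y) |-> (-1)^p f(x, y) is such a total cochain, and applying d_h to its
   row-0 component exhibits f as the coboundary of h. *)

From HB Require Import structures.
From mathcomp Require Import all_boot all_order all_algebra.
From mathcomp Require Import all_classical all_reals all_analysis.
From mathcomp Require Import zify.
Set Implicit Arguments. Unset Strict Implicit. Unset Printing Implicit Defensive.
Import Order.TTheory GRing.Theory Num.Theory.
Local Open Scope classical_set_scope.
Local Open Scope ring_scope.

Lemma bumpE h i : bump h i = if (h <= i)%N then i.+1 else i.
Proof. by rewrite /bump; case: leqP. Qed.

Lemma bump_bumpS i j k : (i <= j)%N -> bump j.+1 (bump i k) = bump i (bump j k).
Proof.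
move=> h; rewrite /bump; case: (leqP i k) => ?; case: (leqP j k) => ? /=.
all: by do ?case: leqP => ?; lia.
Qed.

Section AlternatingSums.
Variable V : zmodType.

Lemma mulrz_signS (x : V) k : x *~ (-1) ^+ k.+1 = - (x *~ (-1) ^+ k).
Proof. by rewrite exprS mulN1r mulrNz. Qed.

Lemma mulrz_signK (x : V) k : x *~ (-1) ^+ k *~ (-1) ^+ k = x.
Proof. by elim: k => [|k IH]; rewrite ?expr0 ?mulr1z // !mulrz_signS mulNrz opprK IH. Qed.

Lemma sum_mulrz_sign (r : seq nat) (F : nat -> V) c :
  \sum_(i <- r) F i *~ c *~ (-1) ^+ i = (\sum_(i <- r) F i *~ (-1) ^+ i) *~ c.
Proof. by rewrite mulrz_suml; apply: eq_bigr => i _; rewrite -!mulrzA mulrC. Qed.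

(* The cancellation behind d o d = 0 for every face-type differential. *)
Lemma simplicial_sum_eq0 (a : nat -> nat -> V) :
  (forall i j, (i <= j)%N -> a j.+1 i = - a i j) ->
  forall N, \sum_(0 <= i < N.+1) \sum_(0 <= j < N) a i j = 0.
Proof.
move=> ha; elim=> [|N IH]; first by rewrite big_nat1 big_geq.
rewrite big_nat_recr //=.
under eq_bigr do rewrite big_nat_recr //=.
rewrite big_split /= IH add0r big_nat_recr //= addrAC -addrA addrCA -big_nat_recr //=.
rewrite [X in X + _](@eq_big_nat _ _ _ 0 N.+1 _ (fun j => - a j N)); last first.
  by move=> j /andP[_ hj]; apply: ha; rewrite -ltnS.
by rewrite sumrN addNr.
Qed.

End AlternatingSums.

Lemma cvg_ptws (X I : Type) (T : topologicalType) (F : set_system X) (FF : Filter F)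
    (h : X -> {ptws I -> T}) (t : {ptws I -> T}) :
  (forall i, (fun x => h x i) @ F --> t i) -> h @ F --> t.
Proof.
move=> ht; apply/cvg_sup => i W /=.
rewrite (@nbhsE (initial_topology (fun f : {ptws I -> T} => f i))) => -[B [oB Bt] BW].
case: oB => C oC CB.
have /ht : nbhs (t i) C by apply: open_nbhs_nbhs; split => //; rewrite -CB in Bt.
by rewrite nbhs_simpl /=; apply: filterS => x Cx; apply: BW; rewrite -CB.
Qed.

Lemma continuous_ptws (X : topologicalType) (I : Type) (T : topologicalType)
    (phi : X -> {ptws I -> T}) :
  (forall i, continuous (fun x => phi x i)) -> continuous phi.
Proof. by move=> h x; apply: cvg_ptws => i; exact: h. Qed.

Lemma comp_continuous (X Y Z : topologicalType) (f : X -> Y) (g : Y -> Z) :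
  continuous f -> continuous g -> continuous (fun x => g (f x)).
Proof. by move=> hf hg x; apply: continuous_comp; [exact: hf | exact: hg]. Qed.

Lemma pair_continuous (X Y Z : topologicalType) (f : X -> Y) (g : X -> Z) :
  continuous f -> continuous g -> continuous (fun x => (f x, g x)).
Proof. by move=> hf hg x; apply: cvg_pair; [exact: hf | exact: hg]. Qed.

Lemma fst_continuous (X Y : topologicalType) : continuous (@fst X Y).
Proof. by move=> [a b]; exact: cvg_fst. Qed.

Lemma snd_continuous (X Y : topologicalType) : continuous (@snd X Y).
Proof. by move=> [a b]; exact: cvg_snd. Qed.

Lemma continuous_withinT (X Y : topologicalType) (f : X -> Y) :
  {within setT, continuous f} -> continuous f.
Proof. by move=> hf x; have := hf x; rewrite /continuous_at nbhs_subspaceT. Qed.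

Lemma within_continuous_precomp (X Y Z : topologicalType) (S : set X) (B : set Y)
    (phi : X -> Y) (f : Y -> Z) :
  {within B, continuous f} -> (forall x, S x -> B (phi x)) -> continuous phi ->
  {within S, continuous (fun x => f (phi x))}.
Proof.
move=> hf hSB hphi; apply/subspace_continuousP => x Sx.
have hfx := (subspace_continuousP _ _).1 hf (phi x) (hSB _ Sx).
apply: (@cvg_comp _ _ _ phi f _ (within B (nbhs (phi x)))) => //.
move=> W /= hW; rewrite /within /= in hW *.
have := hphi x _ hW; rewrite nbhs_simpl /=.
by apply: filterS => z h Sz; exact: h (hSB _ Sz).
Qed.

Section WithinContinuousZmod.
Context {X : topologicalType} (S : set X) {V : topologicalZmodType}.

Lemma within_continuous_add (f g : X -> V) :
  {within S, continuous f} -> {within S, continuous g} ->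
  {within S, continuous (fun x => f x + g x)}.
Proof.
move=> hf hg; apply/subspace_continuousP => x Sx.
have hf' := (subspace_continuousP _ _).1 hf x Sx.
have hg' := (subspace_continuousP _ _).1 hg x Sx.
apply: (@cvg_comp _ _ _ (fun z => (f z, g z)) (fun p => p.1 + p.2) _ (nbhs (f x, g x))).
  exact: cvg_pair.
exact: (@add_continuous V (f x, g x)).
Qed.

Lemma within_continuous_opp (f : X -> V) :
  {within S, continuous f} -> {within S, continuous (fun x => - f x)}.
Proof.
move=> hf; apply/subspace_continuousP => x Sx.
have hf' := (subspace_continuousP _ _).1 hf x Sx.
apply: (@cvg_comp _ _ _ f (fun p => - p) _ (nbhs (f x))) => //.
exact: (@opp_continuous V (f x)).
Qed.

Lemma within_continuous_cst (a : V) : {within S, continuous (fun _ => a)}.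
Proof. by apply: continuous_subspaceT; exact: cst_continuous. Qed.

Lemma within_continuous_mulrz (f : X -> V) z :
  {within S, continuous f} -> {within S, continuous (fun x => f x *~ z)}.
Proof.
have mulrn n : {within S, continuous f} -> {within S, continuous (fun x => f x *+ n)}.
  move=> hf; elim: n => [|n IH].
    by under eq_fun do rewrite mulr0n; exact: within_continuous_cst.
  by under eq_fun do rewrite mulrS; exact: within_continuous_add.
move=> hf; case: z => n; first exact: mulrn.
by under eq_fun do rewrite NegzE mulrNz; apply: within_continuous_opp; exact: mulrn.
Qed.

Lemma within_continuous_sum (I : Type) (r : seq I) (F : I -> X -> V) :
  (forall i, {within S, continuous (F i)}) ->
  {within S, continuous (fun x => \sum_(i <- r) F i x)}.
Proof.
move=> hF; elim: r => [|i r IH].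
  by under eq_fun do rewrite big_nil; exact: within_continuous_cst.
by under eq_fun do rewrite big_cons; exact: within_continuous_add.
Qed.

End WithinContinuousZmod.

(** * Homogeneous cochains *)

Section Cohomology.
Variables (G : topGroup) (A : topGModule G).
Local Notation mul := (@tg_mul G).
Local Notation inv := (@tg_inv G).
Local Notation one := (tg_one G).
Local Notation act := (@tm_act G A).

Lemma tg_mulKVg (a b : G) : mul a (mul (inv a) b) = b.
Proof. by rewrite tg_mulA tg_mulgV tg_mul1g. Qed.

Lemma tg_invK (a : G) : inv (inv a) = a.
Proof. by rewrite -[inv (inv a)]tg_mulg1 -(tg_mulVg a) tg_mulA tg_mulVg tg_mul1g. Qed.

Lemma tg_invM (a b : G) : inv (mul a b) = mul (inv b) (inv a).
Proof.
have ab_inv : mul (mul a b) (mul (inv b) (inv a)) = one.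
  by rewrite -tg_mulA tg_mulKVg tg_mulgV.
by rewrite -[inv (mul a b)]tg_mulg1 -ab_inv tg_mulA tg_mulVg tg_mul1g.
Qed.

Lemma tm_act0 (g : G) : act g 0 = 0.
Proof. by apply: (addrI (act g 0)); rewrite -tm_act_add !addr0. Qed.

Lemma tm_actN (g : G) (a : A) : act g (- a) = - act g a.
Proof. by apply/eqP; rewrite -subr_eq0 opprK -tm_act_add addNr tm_act0. Qed.

Lemma tm_act_sum (g : G) I (r : seq I) (P : pred I) (F : I -> A) :
  act g (\sum_(i <- r | P i) F i) = \sum_(i <- r | P i) act g (F i).
Proof. exact: (big_morph _ (tm_act_add g) (tm_act0 g)). Qed.

Lemma tm_act_mulrz (g : G) (a : A) (z : int) : act g (a *~ z) = act g a *~ z.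
Proof.
have act_mulrn n : act g (a *+ n) = act g a *+ n.
  by elim: n => [|n IH]; rewrite ?mulr0n ?tm_act0 // !mulrS tm_act_add IH.
by case: z => n; rewrite ?NegzE ?mulrNz ?tm_actN act_mulrn.
Qed.

(* Points of G^N are handled through nat-indexed families; reading a family
   out of range returns the unit. *)
Definition tupF N (c : nat -> G) : G ^^ N := fun i => c i.
Arguments tupF : clear implicits.

Definition tnthF N (x : G ^^ N) (k : nat) : G :=
  if (insub k : option 'I_N) is Some i then x i else one.

Lemma tnthF_ord N (x : G ^^ N) (i : 'I_N) : tnthF x i = x i.
Proof. by rewrite /tnthF valK. Qed.

Lemma tupFK N (x : G ^^ N) : tupF N (tnthF x) = x.
Proof. by apply: functional_extensionality_dep => i; rewrite /tupF tnthF_ord. Qed.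

Lemma tnthF_tupF N c k : (k < N)%N -> tnthF (tupF N c) k = c k.
Proof. by move=> h; rewrite /tnthF insubT. Qed.

Lemma eq_tupF N c c' :
  (forall k, (k < N)%N -> c k = c' k) -> tupF N c = tupF N c'.
Proof. by move=> h; apply: functional_extensionality_dep => i; rewrite /tupF h. Qed.

Lemma dhomE n (f : G ^^ n.+1 -> A) x :
  dhom f x =
  \sum_(0 <= i < n.+2) f (tupF n.+1 (fun k => tnthF x (bump i k))) *~ (-1) ^+ i.
Proof.
rewrite big_mkord; apply: eq_bigr => i _; congr (f _ *~ _).
by apply: functional_extensionality_dep => j; rewrite /tupF -tnthF_ord.
Qed.

Lemma dhom_tupF N (f : G ^^ N.+1 -> A) c :
  dhom f (tupF N.+2 c) =
  \sum_(0 <= i < N.+2) f (tupF N.+1 (fun k => c (bump i k))) *~ (-1) ^+ i.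
Proof.
rewrite dhomE; apply: eq_big_nat => i /andP[_ hi]; congr (f _ *~ _).
by apply: eq_tupF => k hk; rewrite tnthF_tupF // bumpE; case: (leqP i k) => ?; lia.
Qed.

Lemma dhom_dhom n (f : G ^^ n.+1 -> A) : dhom (dhom f) = 0.
Proof.
apply: functional_extensionality_dep => x; rewrite dhomE /=.
pose a i j :=
  f (tupF n.+1 (fun k => tnthF x (bump i (bump j k)))) *~ ((-1) ^+ j * (-1) ^+ i).
transitivity (\sum_(0 <= i < n.+3) \sum_(0 <= j < n.+2) a i j); last first.
  apply: simplicial_sum_eq0 => i j hij; rewrite /a exprS mulN1r mulrN mulrNz mulrC.
  by congr (- (f _ *~ _)); apply: eq_tupF => k _; rewrite bump_bumpS.
apply: eq_bigr => i _; rewrite dhomE mulrz_suml; apply: eq_big_nat => j /andP[_ hj].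
rewrite /a mulrzA; congr (f _ *~ _ *~ _); apply: eq_tupF => k hk.
by rewrite tnthF_tupF // bumpE; case: (leqP j k) => ?; lia.
Qed.

Lemma dhom0 n : dhom (0 : G ^^ n.+1 -> A) = 0.
Proof.
by apply: functional_extensionality_dep => x; rewrite /dhom big1 // => i _; rewrite mul0rz.
Qed.

Lemma dhomD n (f g : G ^^ n.+1 -> A) : dhom (f + g) = dhom f + dhom g.
Proof.
apply: functional_extensionality_dep => x; rewrite /dhom !addrfctE /= -big_split.
by apply: eq_bigr => i _ /=; rewrite mulrzDl.
Qed.

Lemma dhomN n (f : G ^^ n.+1 -> A) : dhom (- f) = - dhom f.
Proof.
apply: functional_extensionality_dep => x; rewrite /dhom !opprfctE /= -sumrN.
by apply: eq_bigr => i _ /=; rewrite mulNrz.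
Qed.

Lemma dhom_mulrz n (f : G ^^ n.+1 -> A) z :
  dhom (fun x => f x *~ z) = fun x => dhom f x *~ z.
Proof.
apply: functional_extensionality_dep => x; rewrite /dhom mulrz_suml.
by apply: eq_bigr => i _; rewrite -!mulrzA mulrC.
Qed.

Lemma dhomC p q (H : G ^^ p.+1 -> G ^^ q.+1 -> A) x y :
  dhom (fun y' => dhom (fun x' => H x' y') x) y =
  dhom (fun x' => dhom (fun y' => H x' y') y) x.
Proof.
rewrite /dhom; under eq_bigr do rewrite mulrz_suml.
rewrite exchange_big /=; apply: eq_bigr => i _; rewrite mulrz_suml.
by apply: eq_bigr => j _; rewrite -!mulrzA mulrC.
Qed.

(** * The double complex *)

Local Notation bicochain p q := (G ^^ p.+1 * G ^^ q.+1 -> A).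

Definition dhor p q (F : bicochain p q) : bicochain p.+1 q :=
  fun xy => dhom (fun x => F (x, xy.2)) xy.1.

Lemma dvE p q (F : bicochain p q) xy :
  dv F xy = dhom (fun y => F (xy.1, y)) xy.2 *~ (-1) ^+ p.
Proof. by []. Qed.

Lemma dhor0 p q : dhor (0 : bicochain p q) = 0.
Proof.
apply: functional_extensionality_dep => xy.
exact: (congr1 (fun h => h xy.1) (dhom0 p)).
Qed.

Lemma dv0 p q : dv (0 : bicochain p q) = 0.
Proof.
apply: functional_extensionality_dep => xy; rewrite dvE.
by rewrite (congr1 (fun h => h xy.2) (dhom0 q)) mul0rz.
Qed.

Lemma dhorD p q (F F' : bicochain p q) : dhor (F + F') = dhor F + dhor F'.
Proof.
apply: functional_extensionality_dep => xy.
exact: (congr1 (fun h => h xy.1) (dhomD (fun x => F (x, xy.2)) (fun x => F' (x, xy.2)))).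
Qed.

Lemma dhorN p q (F : bicochain p q) : dhor (- F) = - dhor F.
Proof.
apply: functional_extensionality_dep => xy.
exact: (congr1 (fun h => h xy.1) (dhomN (fun x => F (x, xy.2)))).
Qed.

Lemma dvD p q (F F' : bicochain p q) : dv (F + F') = dv F + dv F'.
Proof.
apply: functional_extensionality_dep => xy; rewrite [in RHS]addrfctE /= !dvE -mulrzDl.
by rewrite (congr1 (fun h => h xy.2) (dhomD (fun y => F (xy.1, y)) (fun y => F' (xy.1, y)))).
Qed.

Lemma dvN p q (F : bicochain p q) : dv (- F) = - dv F.
Proof.
apply: functional_extensionality_dep => xy; rewrite [in RHS]opprfctE /= !dvE -mulNrz.
by rewrite (congr1 (fun h => h xy.2) (dhomN (fun y => F (xy.1, y)))).
Qed.

Lemma dhor_dhor p q (F : bicochain p q) : dhor (dhor F) = 0.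
Proof.
apply: functional_extensionality_dep => xy.
exact: (congr1 (fun h => h xy.1) (dhom_dhom (fun x => F (x, xy.2)))).
Qed.

Lemma dv_dv p q (F : bicochain p q) : dv (dv F) = 0.
Proof.
apply: functional_extensionality_dep => xy; rewrite dvE /=.
under eq_fun do rewrite dvE /=.
rewrite (congr1 (fun h => h xy.2) (dhom_mulrz (dhom (fun y => F (xy.1, y))) _)) /=.
by rewrite (congr1 (fun h => h xy.2) (dhom_dhom (fun y => F (xy.1, y)))) /= !mul0rz.
Qed.

Lemma dv_dhor p q (F : bicochain p q) : dv (dhor F) = - dhor (dv F).
Proof.
apply: functional_extensionality_dep => xy; rewrite dvE /dhor [in RHS]opprfctE /=.
have -> : (fun x => dv F (x, xy.2)) =
          (fun x => dhom (fun y => F (x, y)) xy.2 *~ (-1) ^+ p) by [].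
rewrite (congr1 (fun h => h xy.1) (dhom_mulrz (fun x => dhom (fun y => F (x, y)) xy.2) _)).
by rewrite /= (dhomC (fun x y => F (x, y))) mulrz_signS.
Qed.

(* Families of bicochains in all bidegrees; only the antidiagonal p + q = m
   matters for a total m-cochain. *)
Definition bigraded := forall p q : nat, bicochain p q.

Definition dtot (T : bigraded) : bigraded := fun p q =>
  (match q return bicochain p q with 0 => 0 | q'.+1 => dv (T p q') end) +
  (match p return bicochain p q with 0 => 0 | p'.+1 => dhor (T p' q) end).

Definition addbg (T T' : bigraded) : bigraded := fun p q => T p q + T' p q.
Definition subbg (T T' : bigraded) : bigraded := fun p q => T p q - T' p q.
Arguments dtot : clear implicits.
Arguments addbg : clear implicits.
Arguments subbg : clear implicits.

Lemma dtot00 T : dtot T 0 0 = 0.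
Proof. by rewrite /dtot addr0. Qed.

Lemma dtot0S T q : dtot T 0 q.+1 = dv (T 0 q).
Proof. by rewrite /dtot addr0. Qed.

Lemma dtotS0 T p : dtot T p.+1 0 = dhor (T p 0).
Proof. by rewrite /dtot add0r. Qed.

Lemma dtotSS T p q : dtot T p.+1 q.+1 = dv (T p.+1 q) + dhor (T p q.+1).
Proof. by []. Qed.

Lemma dtot_dtot T p q : dtot (dtot T) p q = 0.
Proof.
case: p => [|p]; case: q => [|q].
- by rewrite dtot00.
- by rewrite dtot0S; case: q => [|q]; rewrite ?dtot00 ?dv0 // dtot0S dv_dv.
- by rewrite dtotS0; case: p => [|p]; rewrite ?dtot00 ?dhor0 // dtotS0 dhor_dhor.
- rewrite dtotSS; case: p => [|p]; case: q => [|q].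
  + by rewrite dtot0S dtotS0 dv_dhor addNr.
  + by rewrite dtot0S dtotSS dvD dv_dv add0r dv_dhor addNr.
  + by rewrite dtotS0 dtotSS dhorD dhor_dhor addr0 dv_dhor addNr.
  + by rewrite !dtotSS dvD dhorD dv_dv dhor_dhor add0r addr0 dv_dhor addNr.
Qed.

Lemma dtot_zero p q : dtot (fun _ _ => 0) p q = 0.
Proof. by case: p => [|p]; case: q => [|q]; rewrite /dtot ?dv0 ?dhor0 addr0. Qed.

Lemma dtot_add T T' p q : dtot (addbg T T') p q = dtot T p q + dtot T' p q.
Proof.
case: p => [|p]; case: q => [|q].
- by rewrite !dtot00 addr0.
- by rewrite !dtot0S dvD.
- by rewrite !dtotS0 dhorD.
- by rewrite !dtotSS dvD dhorD addrACA.
Qed.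

Lemma dtot_sub T T' p q : dtot (subbg T T') p q = dtot T p q - dtot T' p q.
Proof.
case: p => [|p]; case: q => [|q].
- by rewrite !dtot00 subr0.
- by rewrite !dtot0S dvD dvN.
- by rewrite !dtotS0 dhorD dhorN.
- by rewrite !dtotSS !dvD !dhorD dvN dhorN opprD addrACA.
Qed.

(** * The diagonal map and the augmentations *)

(* The vertex z_k shared by both halves is what makes it a chain map from the
   total complex to the homogeneous complex. *)
Definition diag_term (T : bigraded) k q (c : nat -> G) : A :=
  T k q (tupF k.+1 c, tupF q.+1 (fun j => c (k + j)%N)).

Definition diag_cochain n (T : bigraded) : G ^^ n.+1 -> A :=
  fun z => \sum_(0 <= k < n.+1) diag_term T k (n - k) (tnthF z).

Arguments diag_term : clear implicits.
Arguments diag_cochain : clear implicits.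

Lemma diag_cochain_tupF n T c :
  diag_cochain n T (tupF n.+1 c) = \sum_(0 <= k < n.+1) diag_term T k (n - k) c.
Proof.
apply: eq_big_nat => k /andP[_ hk]; rewrite /diag_term.
by congr (T _ _ (_, _)); apply: eq_tupF => m hm; rewrite tnthF_tupF //; lia.
Qed.

Definition dv_diag_term (T : bigraded) k q (c : nat -> G) : A :=
  dv (T k q) (tupF k.+1 c, tupF q.+2 (fun j => c (k + j)%N)).

Definition dhor_diag_term (T : bigraded) k q (c : nat -> G) : A :=
  dhor (T k q) (tupF k.+2 c, tupF q.+1 (fun j => c (k.+1 + j)%N)).

Lemma dv_dhor_diag_term T k q c :
  dv_diag_term T k q c + dhor_diag_term T k q c =
  \sum_(0 <= l < (k + q).+2) diag_term T k q (fun m => c (bump l m)) *~ (-1) ^+ l.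
Proof.
rewrite /dv_diag_term /dhor_diag_term /diag_term dvE /dhor /= !dhom_tupF.
rewrite [in RHS](@big_cat_nat _ _ _ k.+1) //=; last lia.
rewrite [X in X *~ _]big_nat_recl // [X in _ + X]big_nat_recr //=.
set X := tupF k.+1 c; set Y := tupF q.+1 (fun j => c (k.+1 + j)%N).
have hX l : (k < l)%N -> tupF k.+1 (fun m => c (bump l m)) = X.
  by move=> hl; apply: eq_tupF => m hm; rewrite bumpE; case: leqP => ?; [lia|].
have -> : tupF q.+1 (fun j => c (k + bump 0 j)%N) = Y.
  by apply: eq_tupF => m hm; rewrite bumpE /=; congr c; lia.
rewrite (hX k.+1) //.
have -> : \sum_(0 <= i < k.+1) T k q (tupF k.+1 (fun j => c (bump i j)), Y) *~ (-1) ^+ i =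
  \sum_(0 <= l < k.+1) T k q (tupF k.+1 (fun m => c (bump l m)),
                              tupF q.+1 (fun j => c (bump l (k + j)))) *~ (-1) ^+ l.
  apply: eq_big_nat => l /andP[_ hl]; congr (T _ _ (_, _) *~ _).
  by apply: eq_tupF => m hm; rewrite bumpE; case: leqP => ?; [congr c|]; lia.
have -> : \sum_(k.+1 <= l < (k + q).+2) T k q (tupF k.+1 (fun m => c (bump l m)),
                              tupF q.+1 (fun j => c (bump l (k + j)))) *~ (-1) ^+ l
  = (\sum_(0 <= j < q.+1) T k q (X, tupF q.+1 (fun i => c (k + bump j.+1 i)%N))
        *~ (-1) ^+ j.+1) *~ (-1) ^+ k.
  rewrite -{1}[k.+1]add0n big_addn.
  have -> : ((k + q).+2 - k.+1 = q.+1)%N by lia.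
  rewrite mulrz_suml; apply: eq_big_nat => j /andP[_ hj].
  rewrite hX; last lia.
  rewrite -mulrzA -exprD; congr (T _ _ (_, _) *~ (-1) ^+ _); last lia.
  by apply: eq_tupF => m hm; rewrite !bumpE; do 2 case: leqP => ?; congr c; lia.
rewrite expr0 mulr1z mulrz_signS mulrzDl.
by rewrite [LHS]addrC addrA subrK.
Qed.

Lemma diag_cochain_dtot n T : diag_cochain n.+1 (dtot T) = dhom (diag_cochain n T).
Proof.
apply: functional_extensionality_dep => z; rewrite -(tupFK z); move: (tnthF z) => c.
rewrite diag_cochain_tupF dhom_tupF.
have split_term k : (k < n.+2)%N -> diag_term (dtot T) k (n.+1 - k) c =
    (if (k <= n)%N then dv_diag_term T k (n - k) c else 0) +
    (if k is k'.+1 then dhor_diag_term T k' (n - k') c else 0).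
  case: k => [|k] hk; first by rewrite !subn0 /diag_term dtot0S addr0.
  have [hkn|hkn] := leqP k.+1 n.
    have -> : (n.+1 - k.+1 = (n - k.+1).+1)%N by lia.
    rewrite /diag_term dtotSS; congr (_ + _).
    by rewrite /dhor_diag_term; have -> : ((n - k.+1).+1 = n - k)%N by lia.
  have -> : k = n by lia.
  by rewrite !subnn /diag_term dtotS0 add0r.
under eq_big_nat => k /andP[_ hk] do rewrite split_term //.
rewrite big_split /= big_nat_recr //= ltnn addr0 [X in _ + X]big_nat_recl //= add0r.
rewrite (@eq_big_nat _ _ _ 0 n.+1 _ (fun i => dv_diag_term T i (n - i) c)); last first.
  by move=> i /andP[_ hi]; rewrite ltnS in hi; rewrite hi.
rewrite -big_split /=.
under [RHS]eq_big_nat => l _ do rewrite diag_cochain_tupF mulrz_suml.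
rewrite exchange_big_nat /=; apply: eq_big_nat => k /andP[_ hk].
by rewrite dv_dhor_diag_term; have -> : (k + (n - k) = n)%N by lia.
Qed.

Lemma diag_cochain_add n T T' :
  diag_cochain n (addbg T T') = diag_cochain n T + diag_cochain n T'.
Proof.
by apply: functional_extensionality_dep => z; rewrite [in RHS]addrfctE /= -big_split.
Qed.

Lemma eq_diag_cochain n T T' : (forall p q, (p + q = n)%N -> T p q = T' p q) ->
  diag_cochain n T = diag_cochain n T'.
Proof.
move=> h; apply: functional_extensionality_dep => z.
apply: eq_big_nat => k /andP[_ hk]; rewrite /diag_term h //; lia.
Qed.

(* The images of the two augmentations: a homogeneous m-cochain placed in
   column 0 (read on the second factor) or in row 0 (read on the first). *)
Definition col0 m (g : G ^^ m.+1 -> A) : bigraded := fun p q xy =>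
  if p == 0%N then g (tupF m.+1 (tnthF xy.2)) else 0.

Definition row0 m (h : G ^^ m.+1 -> A) : bigraded := fun p q xy =>
  if q == 0%N then h (tupF m.+1 (tnthF xy.1)) else 0.

Arguments col0 : clear implicits.
Arguments row0 : clear implicits.

Lemma col0_0 m g : col0 m g 0 m = fun xy => g xy.2.
Proof. by apply: functional_extensionality_dep => xy; rewrite /col0 /= tupFK. Qed.

Lemma col0_S m g p q : col0 m g p.+1 q = 0.
Proof. by apply: functional_extensionality_dep. Qed.

Lemma row0_0 m h : row0 m h m 0 = fun xy => h xy.1.
Proof. by apply: functional_extensionality_dep => xy; rewrite /row0 /= tupFK. Qed.

Lemma row0_S m h p q : row0 m h p q.+1 = 0.
Proof. by apply: functional_extensionality_dep. Qed.

Lemma diag_cochain_col0 n g : diag_cochain n (col0 n g) = g.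
Proof.
apply: functional_extensionality_dep => z; rewrite -(tupFK z); move: (tnthF z) => c.
rewrite diag_cochain_tupF big_nat_recl // big1_seq ?addr0 /=.
  by rewrite /diag_term /col0 /=; congr g; apply: eq_tupF => k hk; rewrite tnthF_tupF //; lia.
by move=> k _; rewrite /diag_term /col0.
Qed.

Lemma diag_cochain_row0 n h : diag_cochain n (row0 n h) = h.
Proof.
apply: functional_extensionality_dep => z; rewrite -(tupFK z); move: (tnthF z) => c.
rewrite diag_cochain_tupF big_nat_recr //= big1_seq ?add0r /=.
  by rewrite /diag_term /row0 subnn /=; congr h; apply: eq_tupF => k hk; rewrite tnthF_tupF.
move=> k; rewrite mem_index_iota => /andP[_ hk]; rewrite /diag_term /row0.
by have -> : (n - k == 0)%N = false by apply/negbTE; lia.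
Qed.

Lemma dv_col0 m g : dv (col0 m g 0 m) = fun xy => dhom g xy.2.
Proof.
rewrite col0_0; apply: functional_extensionality_dep => xy.
by rewrite dvE expr0 mulr1z.
Qed.

Lemma dhor_col0 m g q : dhor (col0 m g 0 q) = 0.
Proof.
apply: functional_extensionality_dep => -[x y].
by rewrite /dhor /dhom /col0 /= big_ord_recr /= big_ord1 expr0 expr1 mulr1z mulrN1z subrr.
Qed.

Lemma dtot_col0 m g p q : dtot (col0 m g) p.+1 q.+1 = 0.
Proof.
rewrite dtotSS col0_S dv0 add0r; case: p => [|p]; first exact: dhor_col0.
by rewrite col0_S dhor0.
Qed.

Lemma dhor_col0_row0 m g : dhor (col0 m g m 0) = 0.
Proof. by case: m g => [|m] g; [exact: dhor_col0 | rewrite col0_S dhor0]. Qed.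

Lemma dhor_dtot_row0 (S : bigraded) m : dhor (dtot S m 0) = 0.
Proof. by case: m => [|m]; rewrite ?dtot00 ?dhor0 // dtotS0 dhor_dhor. Qed.

Definition catF a (u v : nat -> G) k := if (k < a)%N then u k else v (k - a)%N.

(* For a cocycle f, the total coboundary of concat_bg f is f read on the second
   factor in column 0 and -f read on the first factor in row 0, and vanishes
   elsewhere: it connects the images of the two augmentations. *)
Definition concat_bg n (f : G ^^ n.+1 -> A) : bigraded := fun p q xy =>
  f (tupF n.+1 (catF p.+1 (tnthF xy.1) (tnthF xy.2))) *~ (-1) ^+ p.

Arguments concat_bg : clear implicits.

Lemma dhom_catF N p q (f : G ^^ N.+1 -> A) u v : (p + q = N)%N ->
  dhom f (tupF N.+2 (catF p.+1 u v)) =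
  \sum_(0 <= i < p.+1) f (tupF N.+1 (catF p (fun k => u (bump i k)) v)) *~ (-1) ^+ i +
  (\sum_(0 <= j < q.+1) f (tupF N.+1 (catF p.+1 u (fun k => v (bump j k)))) *~ (-1) ^+ j)
     *~ (-1) ^+ p.+1.
Proof.
move=> hN; rewrite dhom_tupF (@big_cat_nat _ _ _ p.+1) //=; last lia.
congr (_ + _).
  apply: eq_big_nat => i /andP[_ hi]; congr (f _ *~ _); apply: eq_tupF => k hk.
  rewrite /catF !bumpE; case: (leqP i k) => ?; do ?case: ltnP => ?; try lia;
  first [ by [] | congr v; lia | congr u; lia ].
rewrite -{1}[p.+1]add0n big_addn mulrz_suml.
have -> : (N.+2 - p.+1 = q.+1)%N by lia.
apply: eq_big_nat => j /andP[_ hj]; rewrite -mulrzA -exprD addnC.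
congr (f _ *~ _); apply: eq_tupF => k hk.
rewrite /catF !bumpE; case: (leqP (p.+1 + j) k) => ?; case: (leqP j (k - p.+1)) => ?;
  do ?case: ltnP => ?; try lia; first [ by [] | congr v; lia | congr u; lia ].
Qed.

Lemma concat_bg_face2 n f p q x (y : G ^^ q.+2) j : (p + q.+1 = n)%N -> (j < q.+2)%N ->
  concat_bg n f p q (x, tupF q.+1 (fun k => tnthF y (bump j k))) =
  f (tupF n.+1 (catF p.+1 (tnthF x) (fun k => tnthF y (bump j k)))) *~ (-1) ^+ p.
Proof.
move=> hn hj; rewrite /concat_bg /=; congr (f _ *~ _); apply: eq_tupF => k hk.
by rewrite /catF; case: ltnP => ? //; rewrite tnthF_tupF //; lia.
Qed.

Lemma concat_bg_face1 n f p q (x : G ^^ p.+2) y i :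
  concat_bg n f p q (tupF p.+1 (fun k => tnthF x (bump i k)), y) =
  f (tupF n.+1 (catF p.+1 (fun k => tnthF x (bump i k)) (tnthF y))) *~ (-1) ^+ p.
Proof.
rewrite /concat_bg /=; congr (f _ *~ _); apply: eq_tupF => k hk.
by rewrite /catF; case: ltnP => ? //; rewrite tnthF_tupF.
Qed.

Section ConcatCocycle.
Variables (m : nat) (f : G ^^ m.+2 -> A).
Hypothesis df0 : dhom f = 0.

Lemma dtot_concat_bg_col0 : dtot (concat_bg m.+1 f) 0 m.+1 = fun xy => f xy.2.
Proof.
apply: functional_extensionality_dep => -[x y].
rewrite dtot0S dvE /= expr0 mulr1z dhomE.
under eq_big_nat => i /andP[_ hi] do rewrite concat_bg_face2 // expr0 mulr1z.
have := congr1 (fun h => h (tupF m.+3 (catF 1 (tnthF x) (tnthF y)))) df0.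
rewrite (@dhom_catF _ 0 m.+1) // big_nat1 expr0 mulr1z mulrz_signS expr0 mulr1z.
have -> : tupF m.+2 (catF 0 (fun k => tnthF x (bump 0 k)) (tnthF y)) = y.
  by rewrite -[RHS]tupFK; apply: eq_tupF => k hk; rewrite /catF subn0.
by move/eqP; rewrite subr_eq0 => /eqP ->.
Qed.

Lemma dtot_concat_bg p q : (p.+1 + q.+1 = m.+1)%N -> dtot (concat_bg m.+1 f) p.+1 q.+1 = 0.
Proof.
move=> hpq; apply: functional_extensionality_dep => -[x y].
rewrite dtotSS addrfctE /= dvE /dhor /= !dhomE.
under eq_big_nat => i /andP[_ hi] do rewrite concat_bg_face2 //.
under [X in _ + X]eq_big_nat => i /andP[_ hi] do rewrite concat_bg_face1.
rewrite !sum_mulrz_sign mulrz_signK.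
have := congr1 (fun h => h (tupF m.+3 (catF p.+2 (tnthF x) (tnthF y)))) df0.
rewrite (@dhom_catF _ p.+1 q.+1); last lia.
rewrite !mulrz_signS opprK => /eqP; rewrite addr_eq0 => /eqP ->.
by rewrite mulNrz mulrz_signK; apply/eqP; rewrite subr_eq0; apply/eqP; apply: eq_big_nat.
Qed.

Lemma dhor_concat_bg_row0 : dhor (concat_bg m.+1 f m 0) = fun xy => - f xy.1.
Proof.
apply: functional_extensionality_dep => -[x y].
rewrite /dhor /= dhomE.
under eq_big_nat => i /andP[_ hi] do rewrite concat_bg_face1.
rewrite sum_mulrz_sign.
have := congr1 (fun h => h (tupF m.+3 (catF m.+2 (tnthF x) (tnthF y)))) df0.
rewrite (@dhom_catF _ m.+1 0); last lia.
rewrite big_nat1 expr0 mulr1z.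
have -> : tupF m.+2 (catF m.+2 (tnthF x) (fun k => tnthF y (bump 0 k))) = x.
  by rewrite -[RHS]tupFK; apply: eq_tupF => k hk; rewrite /catF hk.
rewrite !mulrz_signS opprK => /eqP; rewrite addr_eq0 => /eqP ->.
by rewrite mulNrz mulrz_signK.
Qed.

End ConcatCocycle.

Definition single_bg j d (H : bicochain j d) : bigraded := fun p q xy =>
  if (p == j) && (q == d) then H (tupF j.+1 (tnthF xy.1), tupF d.+1 (tnthF xy.2)) else 0.

Arguments single_bg : clear implicits.

Lemma single_bg_id j d H : single_bg j d H j d = H.
Proof.
by apply: functional_extensionality_dep => -[x y]; rewrite /single_bg !eqxx /= !tupFK.
Qed.

Lemma single_bg_col j d H p q : p != j -> single_bg j d H p q = 0.
Proof.
by move=> hp; apply: functional_extensionality_dep => xy; rewrite /single_bg (negbTE hp).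
Qed.

Lemma single_bg_row j d H q : q != d -> single_bg j d H j q = 0.
Proof.
by move=> hq; apply: functional_extensionality_dep => xy; rewrite /single_bg (negbTE hq) andbF.
Qed.

Lemma dtot_single_bg j d H : dtot (single_bg j d H) j d.+1 = dv H.
Proof.
case: j H => [|j] H; first by rewrite dtot0S single_bg_id.
by rewrite dtotSS single_bg_id single_bg_col ?dhor0 ?addr0 // neq_ltn ltnSn.
Qed.

(** * Local continuity and invariance *)

Lemma tg_mul_continuous (X : topologicalType) (a b : X -> G) :
  continuous a -> continuous b -> continuous (fun x => mul (a x) (b x)).
Proof.
move=> ha hb; apply: (@comp_continuous _ _ _ (fun x => (a x, b x)) (fun p => mul p.1 p.2)).
  exact: pair_continuous.
exact: tg_mul_cont.
Qed.

Lemma tg_inv_continuous (X : topologicalType) (a : X -> G) :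
  continuous a -> continuous (fun x => inv (a x)).
Proof. by move=> ha; apply: comp_continuous ha _; exact: tg_inv_cont. Qed.

Lemma within_continuous_act (X : topologicalType) (S : set X) (a : X -> G) (b : X -> A) :
  continuous a -> {within S, continuous b} ->
  {within S, continuous (fun x => act (a x) (b x))}.
Proof.
move=> ha hb; apply/subspace_continuousP => x Sx.
have hb' := (subspace_continuousP _ _).1 hb x Sx.
have ha' : a @ within S (nbhs x) --> a x.
  exact: (cvg_trans (cvg_app a (@cvg_within _ (nbhs x) _ S)) (ha x)).
apply: (@cvg_comp _ _ _ (fun z => (a z, b z)) (fun p => act p.1 p.2) _ (nbhs (a x, b x))).
  exact: cvg_pair.
exact: (@tm_act_cont G A (a x, b x)).
Qed.

Lemma tuple_coord_continuous N (i : 'I_N) : continuous (fun x : G ^^ N => x i).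
Proof. exact: (@proj_continuous _ (fun _ => tg_car G) i). Qed.

Lemma tnthF_continuous N k : continuous (fun x : G ^^ N => tnthF x k).
Proof.
by rewrite /tnthF; case: insub => [i|]; [exact: tuple_coord_continuous | exact: cst_continuous].
Qed.

Lemma face_continuous n (i : 'I_n.+2) :
  continuous (fun x : G ^^ n.+2 => ((fun j : 'I_n.+1 => x (lift i j)) : G ^^ n.+1)).
Proof. by apply: continuous_ptws => j; exact: tuple_coord_continuous. Qed.

Lemma catF_continuous p q N :
  continuous (fun xy : G ^^ p.+1 * G ^^ q.+1 => tupF N (catF p.+1 (tnthF xy.1) (tnthF xy.2))).
Proof.
apply: continuous_ptws => k; rewrite /tupF /catF; case: ltnP => _.
  exact: comp_continuous (@fst_continuous _ _) (@tnthF_continuous _ _).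
exact: comp_continuous (@snd_continuous _ _) (@tnthF_continuous _ _).
Qed.

Definition ltransV (g : G) N (x : G ^^ N) : G ^^ N := fun i => mul (inv g) (x i).

Lemma ltransV_mul N (g a : G) (x : G ^^ N) :
  ltransV (mul (inv g) a) (ltransV g x) = ltransV a x.
Proof.
by apply: functional_extensionality_dep => i; rewrite /ltransV tg_invM tg_invK -tg_mulA tg_mulKVg.
Qed.

Lemma tnthF_ltransV N g (x : G ^^ N) k :
  (k < N)%N -> tnthF (ltransV g x) k = mul (inv g) (tnthF x k).
Proof. by move=> hk; rewrite /tnthF insubT. Qed.

Lemma Gamma_ltransV U q g (y : G ^^ q.+1) : Gamma G U q y -> Gamma G U q (ltransV g y).
Proof.
by case: q y => [|q] y //= h i j; rewrite /ltransV tg_invM tg_invK -tg_mulA tg_mulKVg.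
Qed.

Lemma Gamma_subset U V q : U `<=` V -> Gamma G U q `<=` Gamma G V q.
Proof. by case: q => [|q] //= UV y h i j; apply: UV. Qed.

(* [U one] is needed when m = 0: Gamma_U^0 imposes no condition on z. *)
Lemma Gamma_subfamily U m q (z : G ^^ m.+1) (y : G ^^ q.+1) : U one ->
  (forall i, exists i', y i = z i') -> Gamma G U m z -> Gamma G U q y.
Proof.
case: q y => [|q] y U1 h hz //= i j.
have [i' ->] := h i; have [j' ->] := h j.
case: m z hz i' j' {h} => [|m] z hz i' j' /=; last exact: hz.
by rewrite !ord1 tg_mulVg.
Qed.

Definition lc_on_Gamma m (f : G ^^ m.+1 -> A) : Prop :=
  exists U : set G, nbhs one U /\ {within Gamma G U m, continuous f}.

Lemma lc_on_Gamma_sum m (r : seq nat) (F : nat -> G ^^ m.+1 -> A) :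
  (forall k, k \in r -> lc_on_Gamma (F k)) ->
  lc_on_Gamma (fun z => \sum_(k <- r) F k z).
Proof.
elim: r => [|k r IH] h.
  exists setT; split; first exact: filterT.
  have -> : (fun z => \sum_(k <- [::]) F k z) = fun _ => 0.
    by apply: functional_extensionality_dep => z; rewrite big_nil.
  exact: within_continuous_cst.
have [U [hU hk]] := h k (mem_head _ _).
have [V [hV hr]] := IH (fun k' hk' => h k' ltac:(by rewrite inE hk' orbT)).
exists (U `&` V); split; first exact: filterI.
have -> : (fun z => \sum_(i <- k :: r) F i z) = fun z => F k z + \sum_(i <- r) F i z.
  by apply: functional_extensionality_dep => z; rewrite big_cons.
apply: within_continuous_add.
  by apply: continuous_subspaceW hk; apply: Gamma_subset; exact: subIsetl.
by apply: continuous_subspaceW hr; apply: Gamma_subset; exact: subIsetr.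
Qed.

Definition bi_equivariant p q (F : bicochain p q) : Prop :=
  forall (g : G) x y, act g (F (ltransV g x, ltransV g y)) = F (x, y).

Definition AlcG p q (F : bicochain p q) : Prop := bi_equivariant F /\ Alc F.

Lemma AlcG0 p q : AlcG (0 : bicochain p q).
Proof.
split; first by move=> g x y; rewrite tm_act0.
by exists setT; split; [exact: filterT | exact: within_continuous_cst].
Qed.

Lemma AlcGD p q (F F' : bicochain p q) : AlcG F -> AlcG F' -> AlcG (F + F').
Proof.
move=> [iF [U [hU cF]]] [iF' [V [hV cF']]]; split.
  by move=> g x y; rewrite !addrfctE /= tm_act_add iF iF'.
exists (U `&` V); split; first exact: filterI.
apply: within_continuous_add.
  apply: continuous_subspaceW cF => -[x y] [_ h]; split => //.
  exact: Gamma_subset h.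
apply: continuous_subspaceW cF' => -[x y] [_ h]; split => //.
exact: Gamma_subset h.
Qed.

Lemma AlcGN p q (F : bicochain p q) : AlcG F -> AlcG (- F).
Proof.
move=> [iF [U [hU cF]]]; split; first by move=> g x y; rewrite !opprfctE /= tm_actN iF.
by exists U; split => //; apply: within_continuous_opp.
Qed.

Lemma AlcGB p q (F F' : bicochain p q) : AlcG F -> AlcG F' -> AlcG (F - F').
Proof. by move=> h h'; apply: AlcGD => //; apply: AlcGN. Qed.

Lemma AlcG_dhor p q (F : bicochain p q) : AlcG F -> AlcG (dhor F).
Proof.
move=> [iF [U [hU cF]]]; split.
  move=> g x y; rewrite /dhor /dhom tm_act_sum; apply: eq_bigr => i _.
  by rewrite tm_act_mulrz; congr (_ *~ _); exact: iF.
exists U; split => //; rewrite /dhor /dhom.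
apply: within_continuous_sum => i; apply: within_continuous_mulrz.
apply: (within_continuous_precomp cF); first by move=> -[x y] [_ hy]; split.
apply: pair_continuous; last exact: snd_continuous.
exact: comp_continuous (@fst_continuous _ _) (@face_continuous p i).
Qed.

Lemma AlcG_dv p q (F : bicochain p q) : AlcG F -> AlcG (dv F).
Proof.
move=> [iF [U [hU cF]]]; split.
  move=> g x y; rewrite !dvE /dhom tm_act_mulrz tm_act_sum; congr (_ *~ _).
  by apply: eq_bigr => i _; rewrite tm_act_mulrz; congr (_ *~ _); exact: iF.
exists U; split => //.
have U1 : U one by exact: nbhs_singleton.
apply: within_continuous_mulrz; apply: within_continuous_sum => i.
apply: within_continuous_mulrz; apply: (within_continuous_precomp cF).
  move=> -[x y] [_ hy]; split => //=; apply: Gamma_subfamily U1 _ hy.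
  by move=> j; exists (lift i j).
apply: pair_continuous; first exact: fst_continuous.
exact: comp_continuous (@snd_continuous _ _) (@face_continuous q i).
Qed.

Lemma AlcG_dtot (S : bigraded) p q :
  (forall p' q', ((p' + q').+1 = p + q)%N -> AlcG (S p' q')) -> AlcG (dtot S p q).
Proof.
case: p => [|p]; case: q => [|q] hS.
- by rewrite dtot00; exact: AlcG0.
- by rewrite dtot0S; apply: AlcG_dv; apply: hS.
- by rewrite dtotS0; apply: AlcG_dhor; apply: hS.
- by rewrite dtotSS; apply: AlcGD; [apply: AlcG_dv | apply: AlcG_dhor]; apply: hS; lia.
Qed.

Lemma AlcG_col0 m g p q : (p + q = m)%N -> Clc g -> AlcG (col0 m g p q).
Proof.
case: p => [|p] hpq; last by rewrite col0_S => _; exact: AlcG0.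
rewrite add0n in hpq; subst q; move=> [eg [U [hU cg]]]; rewrite col0_0; split.
  by move=> h x y /=; exact: eg.
exists U; split => //; apply: (within_continuous_precomp cg); first by move=> -[x y] [].
exact: snd_continuous.
Qed.

Lemma AlcG_concat_bg n (f : G ^^ n.+1 -> A) p q : Cc f ->
  ((p + q).+1 = n)%N -> AlcG (concat_bg n f p q).
Proof.
move=> [ef cf] hn; split.
  move=> g x y; rewrite /concat_bg /= tm_act_mulrz; congr (_ *~ _).
  rewrite -[RHS](ef g); congr (act g (f _)).
  apply: functional_extensionality_dep => i; rewrite /tupF /catF.
  by case: ltnP => hi; rewrite tnthF_ltransV //; have := ltn_ord i; lia.
exists setT; split; first exact: filterT.
apply: within_continuous_mulrz; apply: continuous_subspaceT.
exact: comp_continuous (@catF_continuous _ _ _) cf.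
Qed.

Lemma AlcG_single_bg j d H : AlcG H -> forall p q, AlcG (single_bg j d H p q).
Proof.
move=> hH p q; have [->|hp] := eqVneq p j; last by rewrite single_bg_col //; exact: AlcG0.
have [->|hq] := eqVneq q d; first by rewrite single_bg_id.
by rewrite single_bg_row //; exact: AlcG0.
Qed.

Lemma Clc_diag_cochain m (S : bigraded) :
  (forall p q, (p + q = m)%N -> AlcG (S p q)) -> Clc (diag_cochain m S).
Proof.
move=> hS; split.
  move=> g z; rewrite /diag_cochain tm_act_sum; apply: eq_big_nat => k /andP[_ hk].
  have [iS _] := hS k (m - k)%N ltac:(lia).
  rewrite -[RHS](iS g) /diag_term; congr (act g (S _ _ (_, _)));
  by apply: functional_extensionality_dep => i; rewrite /tupF tnthF_ltransV //;
     have := ltn_ord i; lia.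
apply: lc_on_Gamma_sum => k; rewrite mem_index_iota => /andP[_ hk].
have [_ [U [hU cSk]]] := hS k (m - k)%N ltac:(lia).
exists U; split => //; have U1 : U one by exact: nbhs_singleton.
apply: (within_continuous_precomp cSk).
  move=> z hz; split => //=; apply: Gamma_subfamily U1 _ hz => j.
  have hj : (k + j < m.+1)%N by have := ltn_ord j; lia.
  by exists (Ordinal hj); rewrite /tupF -(tnthF_ord z (Ordinal hj)).
by apply: pair_continuous; apply: continuous_ptws => i; exact: tnthF_continuous.
Qed.

(** * The staircase argument *)

(* The invariant columns stay exact: as G acts freely on the first factor, a
   primitive H0 of F can be made equivariant by transporting it along the
   first coordinate, H(x, y) = x_0 . H0(x_0^-1 x, x_0^-1 y). *)
Lemma AlcG_column_exact p q (F : bicochain p q.+1) : column_exact A p ->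
  AlcG F -> dv F = 0 -> exists H : bicochain p q, AlcG H /\ F = dv H.
Proof.
move=> [_ [_ col_ex]] [iF aF] dF0; have [H0 [[U [hU cH0]] eF]] := col_ex q F aF dF0.
pose H := fun xy : G ^^ p.+1 * G ^^ q.+1 =>
  act (xy.1 ord0) (H0 (ltransV (xy.1 ord0) xy.1, ltransV (xy.1 ord0) xy.2)).
have x0_cont : continuous (fun xy : G ^^ p.+1 * G ^^ q.+1 => xy.1 ord0).
  exact: comp_continuous (@fst_continuous _ _) (@tuple_coord_continuous _ _).
exists H; split; first split.
- move=> g x y; rewrite /H /= -tm_act_mul tg_mulKVg.
  by have -> : ltransV g x ord0 = mul (inv g) (x ord0) by []; rewrite !ltransV_mul.
- exists U; split => //; apply: within_continuous_act => //.
  apply: (within_continuous_precomp cH0).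
    by move=> -[x y] [_ hy]; split => //=; apply: Gamma_ltransV.
  apply: pair_continuous; apply: continuous_ptws => i; apply: tg_mul_continuous.
  + exact: tg_inv_continuous.
  + exact: comp_continuous (@fst_continuous _ _) (@tuple_coord_continuous _ _).
  + exact: tg_inv_continuous.
  + exact: comp_continuous (@snd_continuous _ _) (@tuple_coord_continuous _ _).
apply: functional_extensionality_dep => -[x y].
rewrite -[LHS](iF (x ord0)) eF !dvE tm_act_mulrz /dhom tm_act_sum; congr (_ *~ _).
by apply: eq_bigr => i _; rewrite tm_act_mulrz.
Qed.

Lemma AlcG_column_exact0 p (F : bicochain p 0) : column_exact A p ->
  AlcG F -> dv F = 0 -> exists h : G ^^ p.+1 -> A, Cc h /\ F = fun xy => h xy.1.
Proof.
move=> [_ [col_ex _]] [iF aF] dF0; have [h [ch eF]] := col_ex F aF dF0.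
exists h; split=> //; split=> // g x.
by have := iF g x (fun _ => one); rewrite eF.
Qed.

Lemma dtot_single_bg_lt j d H p q : (p < j)%N -> dtot (single_bg j d H) p q = 0.
Proof.
have S0 p' q' : (p' < j)%N -> single_bg j d H p' q' = 0.
  by move=> hp'; apply: single_bg_col; rewrite neq_ltn hp'.
case: p => [|p]; case: q => [|q] hpj.
- by rewrite dtot00.
- by rewrite dtot0S S0 // dv0.
- by rewrite dtotS0 S0 ?dhor0 //; lia.
- by rewrite dtotSS !S0 ?dv0 ?dhor0 ?addr0 //; lia.
Qed.

Definition staircase_cochain m d (T : bigraded) : Prop :=
  [/\ forall p q, (p + q = m)%N -> AlcG (T p q),
      forall p q, (p + q = m)%N -> dtot T p q.+1 = 0 &
      forall p q, (p + q = m)%N -> (p + d < m)%N -> T p q = 0].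

Section Staircase.
Hypothesis col_exact : forall p, column_exact A p.

Lemma staircase_base m T : staircase_cochain m 0 T ->
  exists h, Cc h /\ forall p q, (p + q = m)%N -> T p q = row0 m h p q.
Proof.
move=> [hK hD hV].
have dvT : dv (T m 0) = 0.
  have := hD m 0 (addn0 m); case: m hK hD hV => [|m] hK hD hV; first by rewrite dtot0S.
  by rewrite dtotSS (hV m 1%N) ?dhor0 ?addr0 //; lia.
have [h [Ch eT]] := AlcG_column_exact0 (col_exact m) (hK m 0 (addn0 m)) dvT.
exists h; split=> // -[|p] [|q] hpq.
- by rewrite add0n in hpq; subst m; rewrite row0_0.
- by rewrite row0_S hV //; lia.
- by rewrite addn0 in hpq; subst m; rewrite row0_0.
- by rewrite row0_S hV //; lia.
Qed.

(* Column exactness kills the leftmost nonzero entry, in column m - d.+1, by a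
   total coboundary supported in that column. *)
Lemma staircase_step m d T : (d < m)%N -> staircase_cochain m d.+1 T ->
  exists S0 : bigraded, (forall p q, AlcG (S0 p q)) /\
    staircase_cochain m d (subbg T (dtot S0)).
Proof.
move=> hd [hK hD hV]; pose j := (m - d.+1)%N.
have hj : (j + d.+1 = m)%N by rewrite /j; lia.
have dvT : dv (T j d.+1) = 0.
  have := hD j d.+1 hj; case: j hj => [|j'] hj'; first by rewrite dtot0S.
  by rewrite dtotSS (hV j' d.+2) ?dhor0 ?addr0 //; lia.
have [H [KH eH]] := AlcG_column_exact (col_exact j) (hK j d.+1 hj) dvT.
have KS0 := AlcG_single_bg KH.
exists (single_bg j d H); split=> //; split.
- move=> p q hpq; apply: AlcGB; first exact: hK.
  by apply: AlcG_dtot => p' q' _; exact: KS0.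
- by move=> p q hpq; rewrite dtot_sub dtot_dtot hD // subr0.
- move=> p q hpq hpd; rewrite /subbg.
  have [hpj|hpj] := ltnP p j; first by rewrite hV ?dtot_single_bg_lt ?subr0 //; lia.
  have -> : p = j by lia.
  have -> : q = d.+1 by lia.
  by rewrite eH dtot_single_bg subrr.
Qed.

Lemma staircase m T : staircase_cochain m m T ->
  exists S : bigraded, (forall p q, AlcG (S p q)) /\
  exists h, Cc h /\ forall p q, (p + q = m)%N -> T p q = dtot S p q + row0 m h p q.
Proof.
suff: forall d, (d <= m)%N -> forall T, staircase_cochain m d T -> exists S : bigraded,
    (forall p q, AlcG (S p q)) /\
    exists h, Cc h /\ forall p q, (p + q = m)%N -> T p q = dtot S p q + row0 m h p q.
  by move/(_ m (leqnn m)); apply.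
elim=> [|d IH] hd {}T stT.
  have [h [Ch hT]] := staircase_base stT.
  exists (fun _ _ => 0); split; first by move=> p q; exact: AlcG0.
  by exists h; split=> // p q hpq; rewrite dtot_zero add0r hT.
have [S0 [KS0 stT']] := staircase_step hd stT.
have [S [KS [h [Ch hT]]]] := IH (ltnW hd) _ stT'.
exists (addbg S S0); split; first by move=> p q; apply: AlcGD.
exists h; split=> // p q hpq.
by rewrite dtot_add -addrAC -hT // /subbg subrK.
Qed.

Lemma Cc_Clc_injective n (f : G ^^ n.+1 -> A) :
  cocycle (@Cc G A) f -> coboundary (@Clc G A) f -> coboundary (@Cc G A) f.
Proof.
case: n f => [|m] f [Cf df0] //= [g [Cg fdg]].
pose T := subbg (col0 m g) (concat_bg m.+1 f).
have stT : staircase_cochain m m T.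
  split=> [p q hpq | p q hpq | *]; last lia.
    by apply: AlcGB; [exact: AlcG_col0 | apply: AlcG_concat_bg => //; lia].
  rewrite dtot_sub; case: p hpq => [|p] hpq; last by rewrite dtot_col0 dtot_concat_bg ?subrr //; lia.
  rewrite add0n in hpq; subst q.
  by rewrite dtot0S dv_col0 dtot_concat_bg_col0 // -fdg subrr.
have [S [_ [h [Ch hT]]]] := staircase stT.
exists h; split => //.
(* In bidegree (m, 0), d_h kills col0 g and dtot S and turns - concat_bg f into f. *)
have := congr1 (@dhor m 0%N) (hT m 0%N (addn0 m)).
rewrite dhorD row0_0 /T /subbg dhorD dhorN dhor_concat_bg_row0 //.
rewrite dhor_col0_row0 dhor_dtot_row0 !add0r => e1.
apply: functional_extensionality_dep => x.
by have := congr1 (fun F => F (x, (fun _ => one) : G ^^ 1)) e1; rewrite opprfctE /= opprK.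
Qed.

Lemma Cc_Clc_surjective n (f : G ^^ n.+1 -> A) : cocycle (@Clc G A) f ->
  exists f', cocycle (@Cc G A) f' /\ coboundary (@Clc G A) (f - f').
Proof.
case: n f => [|m] f [Cf df0].
  exists f; split; last by rewrite subrr.
  have [ef [U [_ cf]]] := Cf.
  by split=> //; split=> //; exact: continuous_withinT.
have stT : staircase_cochain m.+1 m.+1 (col0 m.+1 f).
  split=> [p q hpq | p q hpq | *]; last lia; first exact: AlcG_col0.
  case: p hpq => [|p] hpq; last exact: dtot_col0.
  by rewrite add0n in hpq; subst q; rewrite dtot0S dv_col0 df0.
have [S [KS [h [Ch hT]]]] := staircase stT.
have ef : f = dhom (diag_cochain m S) + h.
  rewrite -(diag_cochain_col0 f) (eq_diag_cochain (T' := addbg (dtot S) (row0 m.+1 h))) //.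
  by rewrite diag_cochain_add diag_cochain_dtot diag_cochain_row0.
exists h; split.
  by split=> //; have := congr1 (@dhom G A m.+1) ef; rewrite dhomD dhom_dhom add0r df0 => <-.
exists (diag_cochain m S); split; first by apply: Clc_diag_cochain => p q _; exact: KS.
by rewrite ef addrK.
Qed.

End Staircase.

End Cohomology.

Theorem mainTheorem6 (G : topGroup) (A : topGModule G) :
  (forall p : nat, column_exact A p) ->
  inclusion_induces_iso_in_cohomology A.
Proof.
move=> col_exact n; split.
- exact: Cc_Clc_injective.
- exact: Cc_Clc_surjective.
Qed.
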